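(* For all integers $p\ge1$ and $M,N\ge1$, $\lim_{r\to\infty}d_p^r(M,N)=\delta_p(M,N)$.
   Context: For integers $M,N,p,r\ge1$, consider triples $(i,a,b)$ with $i\in\mathbb Z_M^r$, $a\in\mathbb Z_M^p$, $b\in\mathbb Z_N^p$, with cyclic conventions $i_{r+1}=i_1$, $b_{p+1}=b_1$. For $x\in\{1,\dots,r\}$, condition $(E_x)$ says that the multisets $\{(i_x+a_y,b_y),(i_{x+1}+a_y,b_{y+1}):y=1,\dots,p\}$ and $\{(i_x+a_y,b_{y+1}),(i_{x+1}+a_y,b_y):y=1,\dots,p\}$ of elements of $\mathbb Z_M\times\mathbb Z_N$ (counted with multiplicity) coincide. Define $d_p^r(M,N)=\frac{1}{M^{p+r}N^p}\#\{(i,a,b):(E_x)\text{ holds for all }x\}$ and $\delta_p(M,N)=\frac{1}{(MN)^p}\#\{(a,b)\in\mathbb Z_M^p\times\mathbb Z_N^p:\{(a_y,b_y)\}_{y=1}^p=\{(a_y,b_{y+1})\}_{y=1}^p\text{ as multisets}\}$. *)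

From HB Require Import structures.
From mathcomp Require Import all_boot all_order all_algebra.
Set Implicit Arguments. Unset Strict Implicit. Unset Printing Implicit Defensive.
Import Order.TTheory GRing.Theory Num.Theory.

(* Z_M is represented by 'I_M (residues 0..M-1); addition in Z_M is
   (u + v) %% M.  An element of Z_M x Z_N is represented by the pair of
   natural-number residues (u, v) with u < M, v < N.  Index y+1 (cyclic,
   mod p) is ordS y; index x+1 (cyclic, mod r) is ordS x. *)

(* the multiset {(i_x+a_y,b_y),(i_{x+1}+a_y,b_{y+1}) : y} as a sequence *)
Definition lhs_ms (M N p r : nat) (i : {ffun 'I_r -> 'I_M})
  (a : {ffun 'I_p -> 'I_M}) (b : {ffun 'I_p -> 'I_N}) (x : 'I_r) : seq (nat * nat) :=
  flatten [seq [:: (((i x + a y) %% M)%N, val (b y));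
                   (((i (ordS x) + a y) %% M)%N, val (b (ordS y)))] | y <- enum 'I_p].

Definition rhs_ms (M N p r : nat) (i : {ffun 'I_r -> 'I_M})
  (a : {ffun 'I_p -> 'I_M}) (b : {ffun 'I_p -> 'I_N}) (x : 'I_r) : seq (nat * nat) :=
  flatten [seq [:: (((i x + a y) %% M)%N, val (b (ordS y)));
                   (((i (ordS x) + a y) %% M)%N, val (b y))] | y <- enum 'I_p].

Definition Econd (M N p r : nat) (i : {ffun 'I_r -> 'I_M})
  (a : {ffun 'I_p -> 'I_M}) (b : {ffun 'I_p -> 'I_N}) (x : 'I_r) : bool :=
  perm_eq (lhs_ms i a b x) (rhs_ms i a b x).

Definition dpr (p r M N : nat) : rat :=
  (#|[pred t : {ffun 'I_r -> 'I_M} * {ffun 'I_p -> 'I_M} * {ffun 'I_p -> 'I_N}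
       | [forall x : 'I_r, Econd t.1.1 t.1.2 t.2 x]]|%:R
   / (M ^ (p + r) * N ^ p)%:R)%R.

Definition deltap (p M N : nat) : rat :=
  (#|[pred t : {ffun 'I_p -> 'I_M} * {ffun 'I_p -> 'I_N}
       | perm_eq [seq (val (t.1 y), val (t.2 y)) | y <- enum 'I_p]
                 [seq (val (t.1 y), val (t.2 (ordS y))) | y <- enum 'I_p]]|%:R
   / ((M * N) ^ p)%:R)%R.

From HB Require Import structures.
From mathcomp Require Import all_boot all_order all_algebra.
From mathcomp Require Import zify ring.
Import Order.TTheory GRing.Theory Num.Theory.
Set Implicit Arguments. Unset Strict Implicit. Unset Printing Implicit Defensive.

(* If the multisets {(a_y, b_y)} and {(a_y, b_{y+1})} coincide, then (E_x) holds
   for every i, so such (a, b) contribute all M^r choices of i.  Otherwise (E_x)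
   fails whenever i_{x+1} = i_x + 1: (E_x) then says that the difference of the
   two multisets, counted along each line {k} x Z_N, is invariant under k |-> k+1,
   hence constant in k, hence zero because both multisets have the same
   Z_N-marginal.  So i must avoid successor steps at the r - 1 non-wrapping
   positions, which leaves at most M (M-1)^(r-1) choices, and the Bernoulli bound
   r (M-1)^(r-1) <= M^r gives 0 <= d_p^r - delta_p <= M / r. *)

Lemma perm_flatten_pairs (S : Type) (T : eqType) (f g : S -> T) (s : seq S) :
  perm_eq (flatten [seq [:: f y; g y] | y <- s]) (map f s ++ map g s).
Proof.
elim: s => //= y s IH.
by rewrite perm_cons perm_sym (perm_catCA _ [:: g y]) /= perm_cons perm_sym.
Qed.

Lemma sum_boolE (T : finType) (P : pred T) : (\sum_(x : T) P x)%N = #|P|.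
Proof.
by rewrite -sum1_card [RHS]big_mkcond; apply: eq_bigr => x _; rewrite unfold_in; case: (P x).
Qed.

Lemma bernoulli_leq m n : (n.+1 * m ^ n <= m.+1 ^ n.+1)%N.
Proof.
elim: n => [|n IH]; first by rewrite mul1n.
have le_pow : (m ^ n.+1 <= m.+1 ^ n.+1)%N by rewrite leq_exp2r.
have IHm : (m * (n.+1 * m ^ n) <= m * m.+1 ^ n.+1)%N by rewrite leq_mul2l IH orbT.
move: le_pow IHm; rewrite [m.+1 ^ n.+2]expnS [m ^ n.+1]expnS.
set X := (m ^ n)%N; set Y := (m.+1 ^ n.+1)%N; nia.
Qed.

Section ResidueShift.
Variable M : nat.
Hypothesis M_gt0 : (0 < M)%N.

Definition shift (w : nat) (q : nat * nat) : nat * nat := (((w + q.1) %% M)%N, q.2).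

Definition mod_count (s : seq (nat * nat)) (k t : nat) : nat :=
  count (fun q => (q.1 == k %[mod M]) && (q.2 == t)) s.

Lemma shift_mod w : shift (w %% M) =1 shift w.
Proof. by move=> q; rewrite /shift modnDml. Qed.

Lemma count_shift w k x t s : x = (w + k)%N ->
  count_mem (x %% M, t)%N (map (shift w) s) = mod_count s k t.
Proof. by move=> ->; rewrite count_map; apply: eq_count => q; rewrite /= xpair_eqE eqn_modDl. Qed.

Lemma sum_mod_count s t :
  (\sum_(k < M) mod_count s k t = count (fun q => q.2 == t) s)%N.
Proof.
elim: s => [|q s IH] /=; first by rewrite big1.
rewrite big_split /= IH; congr (_ + _)%N.
rewrite (bigD1 (Ordinal (ltn_pmod q.1 M_gt0))) //= modn_mod eqxx big1 ?addn0 // => k.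
case: andP => // -[/eqP qk _] /eqP[]; apply/val_inj.
by rewrite /= qk modn_small.
Qed.

Lemma mod_count_succ u s1 s2 :
  perm_eq (map snd s1) (map snd s2) ->
  perm_eq (map (shift u) s1 ++ map (shift u.+1) s2)
          (map (shift u) s2 ++ map (shift u.+1) s1) ->
  forall k t, mod_count s1 k t = mod_count s2 k t.
Proof.
move=> snd12 /permP shifted.
have step k t : (mod_count s1 k.+1 t + mod_count s2 k t =
                 mod_count s2 k.+1 t + mod_count s1 k t)%N.
  have := shifted (pred1 ((u + k.+1) %% M, t)%N).
  by rewrite !count_cat !(count_shift (w := u) (k := k.+1)) ?(count_shift (k := k)) ?addSnnS.
have diff_const k t : (mod_count s1 k t + mod_count s2 0 t =
                       mod_count s2 k t + mod_count s1 0 t)%N.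
  by elim: k => [|k IH]; [rewrite addnC | have := step k t; lia].
have same_snd t : count (fun q => q.2 == t) s1 = count (fun q => q.2 == t) s2.
  by have := permP snd12 (pred1 t); rewrite !count_map.
have base t : mod_count s1 0 t = mod_count s2 0 t.
  have : (\sum_(k < M) (mod_count s1 k t + mod_count s2 0 t) =
          \sum_(k < M) (mod_count s2 k t + mod_count s1 0 t))%N.
    by apply: eq_bigr => k _; apply: diff_const.
  rewrite !big_split /= !sum_mod_count same_snd !sum_nat_const card_ord.
  by move/eqP; rewrite eqn_add2l eqn_pmul2l // => /eqP.
by move=> k t; have := diff_const k t; rewrite base; lia.
Qed.

Lemma perm_shift0 s1 s2 :
  (forall k t, mod_count s1 k t = mod_count s2 k t) ->
  perm_eq (map (shift 0) s1) (map (shift 0) s2).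
Proof.
move=> same; apply/allP => -[k t] _ /=; apply/eqP.
have [kM | Mk] := ltnP k M.
  by rewrite -(modn_small kM) !(count_shift (w := 0) (k := k)) ?same.
have notin s : (k, t) \notin map (shift 0) s.
  by apply/mapP => -[q _ [kq _]]; move: Mk; rewrite kq leqNgt ltn_pmod.
by rewrite !(count_memPn (notin _)).
Qed.

Lemma map_shift0 s : all (fun q => q.1 < M)%N s -> map (shift 0) s = s.
Proof.
move=> /allP small; rewrite -[RHS]map_id; apply/eq_in_map => -[k t] /small /= kM.
by rewrite /shift /= modn_small.
Qed.
End ResidueShift.

Section FfunPath.
Variables (T : finType) (e : rel T).

Definition ffun_path n (f : {ffun 'I_n -> T}) : bool :=
  [forall x : 'I_n, forall y : 'I_n, (val y == (val x).+1) ==> e (f x) (f y)].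

Definition ffun_cons n (t : T) (g : {ffun 'I_n -> T}) : {ffun 'I_n.+1 -> T} :=
  [ffun k => if unlift ord0 k is Some j then g j else t].

Lemma ffun_cons0 n t (g : {ffun 'I_n -> T}) : ffun_cons t g ord0 = t.
Proof. by rewrite ffunE unlift_none. Qed.

Lemma ffun_consS n t (g : {ffun 'I_n -> T}) j : ffun_cons t g (lift ord0 j) = g j.
Proof. by rewrite ffunE liftK. Qed.

Lemma ffun_cons_bij n : bijective (fun tg : T * {ffun 'I_n -> T} => ffun_cons tg.1 tg.2).
Proof.
exists (fun f : {ffun 'I_n.+1 -> T} => (f ord0, [ffun j : 'I_n => f (lift ord0 j)])).
  move=> [t g] /=; rewrite ffun_cons0; congr (_, _).
  by apply/ffunP => j; rewrite ffunE ffun_consS.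
move=> f; apply/ffunP => k; rewrite ffunE /=.
by case: unliftP => [j ->|->]; rewrite ?ffunE.
Qed.

Lemma big_ffun_cons n (F : {ffun 'I_n.+1 -> T} -> nat) :
  (\sum_(f : {ffun 'I_n.+1 -> T}) F f = \sum_t \sum_(g : {ffun 'I_n -> T}) F (ffun_cons t g))%N.
Proof.
by rewrite (reindex _ (onW_bij _ (@ffun_cons_bij n))) /= pair_big.
Qed.

Lemma ffun_path_cons n t (g : {ffun 'I_n.+1 -> T}) :
  ffun_path (ffun_cons t g) -> e t (g ord0) && ffun_path g.
Proof.
move/forallP => path_tg; apply/andP; split.
  by have /forallP/(_ (lift ord0 ord0))/implyP := path_tg ord0; rewrite ffun_cons0 ffun_consS; apply.
apply/forallP => x; apply/forallP => y; apply/implyP => xy.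
have /forallP/(_ (lift ord0 y))/implyP := path_tg (lift ord0 x).
by rewrite !ffun_consS /= /bump /= !add1n eqSS; apply.
Qed.

Lemma card_ffun_path k n : (forall y, #|[pred x | e x y]| <= k) ->
  (\sum_(f : {ffun 'I_n.+1 -> T}) ffun_path f <= #|T| * k ^ n)%N.
Proof.
move=> indeg; elim: n => [|n IH].
  apply: (@leq_trans (\sum_(f : {ffun 'I_1 -> T}) 1)%N).
    by apply: leq_sum => f _; apply: leq_b1.
  by rewrite sum1_card card_ffun card_ord expn1 muln1.
rewrite big_ffun_cons.
apply: (@leq_trans (\sum_t \sum_(g : {ffun 'I_n.+1 -> T}) (e t (g ord0) * ffun_path g))%N).
  apply: leq_sum => t _; apply: leq_sum => g _.
  by case: (ffun_path _) (@ffun_path_cons n t g) => // /(_ isT) /andP [-> ->].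
rewrite exchange_big /= (@leq_trans (\sum_(g : {ffun 'I_n.+1 -> T}) (k * ffun_path g))%N) //.
  by apply: leq_sum => g _; rewrite -big_distrl /= leq_mul2r (sum_boolE [pred x | e x _]) indeg orbT.
by rewrite -big_distrr /= expnS mulnCA leq_mul2l IH orbT.
Qed.
End FfunPath.

Section Pairs.
Variables (M N p : nat).
Implicit Types (a : {ffun 'I_p -> 'I_M}) (b : {ffun 'I_p -> 'I_N}).

Definition pairs_ab a b := [seq (val (a y), val (b y)) | y <- enum 'I_p].
Definition pairs_ab_rot a b := [seq (val (a y), val (b (ordS y))) | y <- enum 'I_p].
Definition delta_cond a b := perm_eq (pairs_ab a b) (pairs_ab_rot a b).

Lemma perm_enum_ordS : perm_eq (map (@ordS p) (enum 'I_p)) (enum 'I_p).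
Proof.
apply: uniq_perm; rewrite ?(map_inj_uniq (@ordS_inj p)) ?enum_uniq // => y.
by rewrite mem_enum; apply/mapP; exists (ord_pred y); rewrite ?mem_enum ?ord_predK.
Qed.

Lemma perm_snd_pairs_ab a b : perm_eq (map snd (pairs_ab a b)) (map snd (pairs_ab_rot a b)).
Proof.
have -> : map snd (pairs_ab_rot a b) = map (fun y => val (b y)) (map (@ordS p) (enum 'I_p)).
  by rewrite -!map_comp.
by rewrite -map_comp perm_sym perm_map // perm_enum_ordS.
Qed.

Lemma pairs_ab_small a b : all (fun q => q.1 < M)%N (pairs_ab a b).
Proof. by apply/allP => _ /mapP [y _ ->] /=. Qed.

Lemma pairs_ab_rot_small a b : all (fun q => q.1 < M)%N (pairs_ab_rot a b).
Proof. by apply/allP => _ /mapP [y _ ->] /=. Qed.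

Variable r : nat.
Implicit Types (i : {ffun 'I_r -> 'I_M}) (x : 'I_r).

Lemma EcondE i a b x :
  Econd i a b x =
  perm_eq (map (shift M (i x)) (pairs_ab a b) ++ map (shift M (i (ordS x))) (pairs_ab_rot a b))
          (map (shift M (i x)) (pairs_ab_rot a b) ++ map (shift M (i (ordS x))) (pairs_ab a b)).
Proof.
rewrite /Econd /lhs_ms /rhs_ms -!map_comp.
by rewrite (permPl (perm_flatten_pairs _ _ _)) (permPr (perm_flatten_pairs _ _ _)).
Qed.

Lemma Econd_delta i a b x : delta_cond a b -> Econd i a b x.
Proof. by move=> dab; rewrite EcondE perm_cat // perm_map // perm_sym. Qed.

Lemma delta_Econd_succ i a b x : (0 < M)%N ->
  val (i (ordS x)) = ((i x).+1 %% M)%N -> Econd i a b x -> delta_cond a b.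
Proof.
move=> M_gt0 succ; rewrite EcondE succ !(eq_map (shift_mod _ _)) => E.
rewrite /delta_cond -(map_shift0 (pairs_ab_small a b)) -(map_shift0 (pairs_ab_rot_small a b)).
exact/perm_shift0/(mod_count_succ M_gt0 (perm_snd_pairs_ab a b) E).
Qed.
End Pairs.

Definition not_succ (M : nat) : rel 'I_M := fun u v => val v != ((val u).+1 %% M)%N.

Lemma card_not_succ M (v : 'I_M) : #|[pred u | not_succ u v]| <= M.-1.
Proof.
have M_gt0 : (0 < M)%N by case: v => /= v; lia.
pose u0 := Ordinal (ltn_pmod (v + M.-1) M_gt0).
have u0v : ~~ not_succ u0 v.
  rewrite /not_succ /= negbK -addn1 modnDml -addnA addn1 prednK //.
  by rewrite modnDr modn_small.
apply: leq_trans (_ : #|[pred u | u != u0]| <= _).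
  by apply: subset_leq_card; apply/subsetP => u; apply: contraTneq => ->.
by rewrite cardC1 card_ord.
Qed.

Section Counting.
Variables (M N p : nat).
Hypothesis M_gt0 : (0 < M)%N.
Implicit Types (a : {ffun 'I_p -> 'I_M}) (b : {ffun 'I_p -> 'I_N}).

Lemma sum_Econd_delta r a b : delta_cond a b ->
  (\sum_(i : {ffun 'I_r -> 'I_M}) [forall x, Econd i a b x] = M ^ r)%N.
Proof.
move=> dab; have -> : (M ^ r = \sum_(i : {ffun 'I_r -> 'I_M}) 1)%N.
  by rewrite sum1_card card_ffun !card_ord.
by apply: eq_bigr => i _; rewrite (_ : [forall x, _]) //; apply/forallP => x; apply: Econd_delta.
Qed.

Lemma Econd_ffun_path r (i : {ffun 'I_r -> 'I_M}) a b : ~~ delta_cond a b ->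
  [forall x, Econd i a b x] -> ffun_path (@not_succ M) i.
Proof.
move=> ndab /forallP E; apply/forallP => x; apply/forallP => y; apply/implyP => /eqP yx.
have xy : ordS x = y by apply: val_inj; rewrite /= -yx modn_small ?ltn_ord.
apply: contra ndab => /eqP succ; apply: (delta_Econd_succ M_gt0 _ (E x)).
by rewrite xy.
Qed.

Lemma sum_Econd_not_delta n a b : ~~ delta_cond a b ->
  (\sum_(i : {ffun 'I_n.+1 -> 'I_M}) [forall x, Econd i a b x] <= M * M.-1 ^ n)%N.
Proof.
move=> ndab; have := card_ffun_path n (@card_not_succ M); rewrite card_ord.
apply: leq_trans.
by apply: leq_sum => i _; case: forallP => // /forallP /(Econd_ffun_path ndab) ->.
Qed.
End Counting.

Section Density.
Variables (M N p : nat).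
Hypotheses (M_gt0 : (0 < M)%N) (N_gt0 : (0 < N)%N).

Let count_E r := (\sum_(a : {ffun 'I_p -> 'I_M}) \sum_(b : {ffun 'I_p -> 'I_N})
  \sum_(i : {ffun 'I_r -> 'I_M}) [forall x, Econd i a b x])%N.
Let count_delta := (\sum_(a : {ffun 'I_p -> 'I_M}) \sum_(b : {ffun 'I_p -> 'I_N})
  delta_cond a b)%N.

Lemma card_Econd_triples r :
  #|[pred t : {ffun 'I_r -> 'I_M} * {ffun 'I_p -> 'I_M} * {ffun 'I_p -> 'I_N}
       | [forall x : 'I_r, Econd t.1.1 t.1.2 t.2 x]]| = count_E r.
Proof.
rewrite /count_E -sum_boolE.
under [RHS]eq_bigr do rewrite exchange_big.
by rewrite [RHS]exchange_big !pair_bigA.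
Qed.

Lemma card_delta_pairs :
  #|[pred t : {ffun 'I_p -> 'I_M} * {ffun 'I_p -> 'I_N}
       | perm_eq [seq (val (t.1 y), val (t.2 y)) | y <- enum 'I_p]
                 [seq (val (t.1 y), val (t.2 (ordS y))) | y <- enum 'I_p]]| = count_delta.
Proof. by rewrite /count_delta -sum_boolE pair_bigA. Qed.

Lemma count_E_bounds n :
  (M ^ n.+1 * count_delta <= count_E n.+1 <=
   M ^ n.+1 * count_delta + (M * N) ^ p * (M * M.-1 ^ n))%N.
Proof.
have per_ab (a : {ffun 'I_p -> 'I_M}) (b : {ffun 'I_p -> 'I_N}) : (M ^ n.+1 * delta_cond a b <=
    \sum_(i : {ffun 'I_n.+1 -> 'I_M}) [forall x, Econd i a b x] <=
    M ^ n.+1 * delta_cond a b + M * M.-1 ^ n)%N.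
  have [dab | ndab] := boolP (delta_cond a b).
    by rewrite sum_Econd_delta // muln1 leqnn leq_addr.
  by rewrite muln0 add0n sum_Econd_not_delta.
rewrite /count_E /count_delta; apply/andP; split.
  rewrite big_distrr; apply: leq_sum => a _; rewrite big_distrr; apply: leq_sum => b _.
  by case/andP: (per_ab a b).
have -> : ((M * N) ^ p * (M * M.-1 ^ n) = \sum_(a : {ffun 'I_p -> 'I_M})
              \sum_(b : {ffun 'I_p -> 'I_N}) (M * M.-1 ^ n))%N.
  by rewrite !sum_nat_const !card_ffun !card_ord expnMn !mulnA.
rewrite big_distrr /= -big_split; apply: leq_sum => a _.
rewrite big_distrr /= -big_split; apply: leq_sum => b _.
by case/andP: (per_ab a b).
Qed.

Lemma count_E_excess n :
  (n.+1 * (count_E n.+1 - M ^ n.+1 * count_delta) <= M * (M ^ (p + n.+1) * N ^ p))%N.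
Proof.
have /andP [_ hi] := count_E_bounds n.
rewrite -leq_subLR in hi.
apply: leq_trans (leq_mul (leqnn n.+1) hi) _.
have := bernoulli_leq M.-1 n; rewrite prednK // => bern.
rewrite (_ : n.+1 * _ = (M * N) ^ p * M * (n.+1 * M.-1 ^ n))%N; last by ring.
rewrite [X in (_ <= X)%N](_ : _ = (M * N) ^ p * M * M ^ n.+1)%N; last first.
  by rewrite expnD expnMn; ring.
by rewrite leq_mul2l bern orbT.
Qed.

Local Open Scope ring_scope.

Lemma dpr_sub_deltap_bounds n :
  0 <= dpr p n.+1 M N - deltap p M N <= M%:R / n.+1%:R.
Proof.
have den_gt0 : 0 < (M ^ (p + n.+1) * N ^ p)%:R :> rat.
  by rewrite ltr0n muln_gt0 !expn_gt0 M_gt0 N_gt0.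
have -> : deltap p M N = (M ^ n.+1 * count_delta)%:R / (M ^ (p + n.+1) * N ^ p)%:R.
  rewrite /deltap card_delta_pairs expnMn expnD !natrM !natrX; field.
  by rewrite !expf_neq0 // pnatr_eq0 -lt0n.
have /andP [lo _] := count_E_bounds n.
rewrite /dpr card_Econd_triples -mulrBl -natrB // divr_ge0 ?ler0n //=.
rewrite ler_pdivrMr // mulrAC ler_pdivlMr ?ltr0n // -!natrM ler_nat mulnC.
exact: count_E_excess.
Qed.
End Density.

Theorem theorem5p4 (p M N : nat) (hp : (0 < p)%N) (hM : (0 < M)%N) (hN : (0 < N)%N) :
  forall eps : rat, (0 < eps)%R ->
    exists R : nat, forall r : nat, (R <= r)%N ->
      (`|dpr p r M N - deltap p M N| < eps)%R.
Proof.
move=> eps eps_gt0; exists (Num.Def.archi_bound (M%:R / eps)).+1 => -[|n] // le_Rn.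
have /andP [lo hi] := dpr_sub_deltap_bounds p hM hN n.
rewrite ger0_norm //; apply: le_lt_trans hi _.
rewrite ltr_pdivrMr ?ltr0n // -ltr_pdivrMl // mulrC.
apply: lt_le_trans (archi_boundP _) _; first by rewrite divr_ge0 ?ler0n ?ltW.
by rewrite ler_nat ltnW.
Qed.
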